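(* (Provable in $\mathrm{ACA}_0$.) Let $X$ be a well-quasi-ordered set. Then the relation $<_2$ on $([X]^{<\omega})^{<\omega}$ is well-founded: there is no infinite sequence $s(0)>_2 s(1)>_2 s(2)>_2\cdots$ of elements of $([X]^{<\omega})^{<\omega}$.
   Context: A well-quasi-order is a quasi-order in which every infinite sequence $x_0,x_1,\dots$ has $i<j$ with $x_i\le x_j$. $[X]^{<\omega}$ is the set of finite subsets of $X$ and $([X]^{<\omega})^{<\omega}$ the set of finite sequences of such. On $[X]^{<\omega}$: $\{y_1,\dots,y_n\}\le_1\{z_1,\dots,z_m\}$ iff for every $j\le m$ there is $i\le n$ with $y_i\le z_j$; $<_1$ is its strict part. On $([X]^{<\omega})^{<\omega}$: $\langle\rho_1,\dots,\rho_n\rangle<_2\langle\sigma_1,\dots,\sigma_m\rangle$ iff there is $f:\{1,\dots,n\}\to\{1,\dots,m\}$ such that $\rho_i\le_1\sigma_{f(i)}$ for all $i\le n$, $\rho_i<_1\sigma_{f(i)}$ for some $i\le n$, and $\rho_i<_1\sigma_{f(i)}$ whenever $i\ne j$ and $f(i)=f(j)$. *)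

From Stdlib Require Import List Arith.
Import ListNotations.

Definition quasi_order {X : Type} (le : X -> X -> Prop) : Prop :=
  (forall x, le x x) /\ (forall x y z, le x y -> le y z -> le x z).

Definition wqo {X : Type} (le : X -> X -> Prop) : Prop :=
  quasi_order le /\
  forall f : nat -> X, exists i j, i < j /\ le (f i) (f j).

(* Finite subsets of X are represented by lists (only membership matters). *)
Definition le1 {X : Type} (le : X -> X -> Prop) (A B : list X) : Prop :=
  forall z, In z B -> exists y, In y A /\ le y z.

Definition lt1 {X : Type} (le : X -> X -> Prop) (A B : list X) : Prop :=
  le1 le A B /\ ~ le1 le B A.

Definition lt2 {X : Type} (le : X -> X -> Prop) (r s : list (list X)) : Prop :=
  exists f : nat -> nat,
    (forall i, i < length r -> f i < length s) /\
    (forall i, i < length r -> le1 le (nth i r []) (nth (f i) s [])) /\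
    (exists i, i < length r /\ lt1 le (nth i r []) (nth (f i) s [])) /\
    (forall i j, i < length r -> j < length r -> i <> j -> f i = f j ->
       lt1 le (nth i r []) (nth (f i) s [])).

(* Suppose s(0) >_2 s(1) >_2 ... and fix witnessing maps F k from the
   positions of s(k+1) to those of s(k).  Reading F k as "parent" turns the
   positions of all the s(k) into a finitely branching forest with finitely
   many roots (the positions of s(0)); every edge goes weakly down for <=_1,
   every level has a strictly decreasing edge, and a node with a weakly
   decreasing edge to some child has no other child.

   Finitely many roots then give a uniform
   bound, contradicting the strict edge present at every level.  Second,
   <_1 is well-founded when X is a wqo.  The theorem combines the two. *)

From Stdlib Require Import List Arith.
From Stdlib Require Import Lia Classical IndefiniteDescription.
Import ListNotations.

Lemma wf_of_no_descending_chain {T : Type} (R : T -> T -> Prop) :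
  (forall g : nat -> T, ~ (forall k, R (g (S k)) (g k))) -> well_founded R.
Proof.
  intros Hchain a. apply NNPP. intro Na.
  assert (step : forall b : {b | ~ Acc R b},
             exists c : {c | ~ Acc R c}, R (proj1_sig c) (proj1_sig b)).
  { intros [b Nb]. apply NNPP. intro Hnone. apply Nb. constructor.
    intros c Hc. apply NNPP. intro Nc. apply Hnone. exists (exist _ c Nc). exact Hc. }
  destruct (functional_choice _ step) as [next Hnext].
  apply (Hchain (fun n => proj1_sig (Nat.iter n next (exist _ a Na)))).
  intro k. apply Hnext.
Qed.

Lemma uniform_bound (B : nat -> nat -> Prop) (K : nat) :
  (forall c, c < K -> exists N, forall d, N <= d -> ~ B c d) ->
  exists N, forall c d, c < K -> N <= d -> ~ B c d.
Proof.
  induction K as [|K IHK]; intro Hb.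
  - exists 0. intros c d Hc. lia.
  - destruct IHK as [N1 HN1]; [intros c Hc; apply Hb; lia|].
    destruct (Hb K (Nat.lt_succ_diag_r K)) as [N2 HN2].
    exists (N1 + N2). intros c d Hc Hd.
    destruct (Nat.eq_dec c K) as [->|Hne]; [apply HN2 | apply HN1]; lia.
Qed.

Section LabelledForest.

Variables (A : Type) (leA ltA : A -> A -> Prop).
Hypothesis leA_refl : forall a, leA a a.
Hypothesis leA_trans : forall a b c, leA a b -> leA b c -> leA a c.
Hypothesis ltA_leA_trans : forall a b c, ltA a b -> leA b c -> ltA a c.
Hypothesis ltA_wf : well_founded ltA.

(* Level k of the forest has nodes 0 .. size k - 1 labelled by [lab k];
   node i of level k+1 has parent [F k i] at level k. *)
Variables (size : nat -> nat) (lab : nat -> nat -> A) (F : nat -> nat -> nat).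
Hypothesis parent_lt : forall k i, i < size (S k) -> F k i < size k.
Hypothesis edge_le : forall k i, i < size (S k) -> leA (lab (S k) i) (lab k (F k i)).

Definition strict (k i : nat) : Prop := ltA (lab (S k) i) (lab k (F k i)).

Hypothesis siblings_strict : forall k i j, i < size (S k) -> j < size (S k) ->
  i <> j -> F k i = F k j -> strict k i.

(* [anc m d j]: the ancestor at level m of node j of level d + m. *)
Fixpoint anc (m d j : nat) : nat :=
  match d with 0 => j | S d => anc m d (F (d + m) j) end.

Lemma anc_lt m d j : j < size (d + m) -> anc m d j < size m.
Proof. revert j; induction d as [|d IHd]; intros j Hj; simpl; auto. Qed.

Lemma anc_S d : forall m j, anc m (S d) j = F m (anc (S m) d j).
Proof.
  induction d as [|d IHd]; intros m j; [reflexivity|].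
  change (anc m (S (S d)) j) with (anc m (S d) (F (S d + m) j)).
  rewrite IHd. simpl. rewrite <- plus_n_Sm. reflexivity.
Qed.

Definition strict_below (m j d : nat) : Prop :=
  exists j', j' < size (S (d + m)) /\ strict (d + m) j' /\ anc m (S d) j' = j.

Definition bounded (m j : nat) : Prop :=
  exists N, forall d, N <= d -> ~ strict_below m j d.

Definition strict_child (m j : nat) : Prop :=
  exists c, c < size (S m) /\ F m c = j /\ strict m c.

Lemma strict_below_0 m j : strict_below m j 0 -> strict_child m j.
Proof. intros [c [Hc [Sc Ac]]]. exists c. simpl in *. auto. Qed.

Lemma strict_below_S m j d : strict_below m j (S d) ->
  exists c, c < size (S m) /\ F m c = j /\ strict_below (S m) c d.
Proof.
  intros [j' [Hj' [Sj' Aj']]].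
  replace (S d + m) with (d + S m) in Hj', Sj' by lia.
  exists (anc (S m) (S d) j'). repeat split.
  - apply anc_lt. exact Hj'.
  - rewrite <- anc_S. exact Aj'.
  - exists j'. auto.
Qed.

(* Finite branching: a node whose children are all bounded is bounded. *)
Lemma bounded_of_children m j :
  (forall c, c < size (S m) -> F m c = j -> bounded (S m) c) -> bounded m j.
Proof.
  intro Hch.
  destruct (uniform_bound (fun c d => F m c = j /\ strict_below (S m) c d) (size (S m)))
    as [N HN].
  { intros c Hc. destruct (Nat.eq_dec (F m c) j) as [Fc|Fc].
    - destruct (Hch c Hc Fc) as [N HN]. exists N. intros d Hd [_ Hb]. exact (HN d Hd Hb).
    - exists 0. intros d _ [Fc' _]. exact (Fc Fc'). }
  exists (S N). intros [|d] Hd Hb; [lia|].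
  destruct (strict_below_S m j d Hb) as [c [Hc [Fc Hbc]]].
  apply (HN c d Hc); [lia | auto].
Qed.

Lemma weak_child_unique m c c' : c < size (S m) -> c' < size (S m) ->
  F m c' = F m c -> ~ strict m c -> c' = c.
Proof.
  intros Hc Hc' Fe Nc. destruct (Nat.eq_dec c' c) as [e|ne]; [exact e|].
  exfalso. apply Nc. apply (siblings_strict m c c'); auto.
Qed.

(* Strict children have smaller labels (outer induction); a node
   without strict child has at most one child, reached by a weak edge, and
   is handled by induction on the depth of a witnessing strict edge. *)
Lemma bounded_below_acc a : Acc ltA a -> forall m j, leA (lab m j) a -> bounded m j.
Proof.
  induction 1 as [a _ IH].
  assert (Hstrict : forall m j, leA (lab m j) a -> strict_child m j -> bounded m j).
  { intros m j Hla [c0 [Hc0 [Fc0 Sc0]]]. apply bounded_of_children. intros c Hc Fc.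
    assert (Sc : strict m c).
    { destruct (Nat.eq_dec c c0) as [->|ne]; [exact Sc0|].
      apply (siblings_strict m c c0); auto. congruence. }
    apply (IH (lab (S m) c)); [|apply leA_refl].
    apply (ltA_leA_trans _ _ _ Sc). rewrite Fc. exact Hla. }
  intros m j Hla.
  destruct (classic (exists d, strict_below m j d)) as [[d Hd]|Hnone].
  2: { exists 0. intros d _ Hd. apply Hnone. exists d. exact Hd. }
  revert m j Hla Hd. induction d as [|d IHd]; intros m j Hla Hd.
  - apply Hstrict; [exact Hla | apply strict_below_0; exact Hd].
  - destruct (classic (strict_child m j)) as [Hs|Ns]; [apply Hstrict; assumption|].
    destruct (strict_below_S m j d Hd) as [c [Hc [Fc Hbc]]].
    assert (Nc : ~ strict m c) by (intro Sc; apply Ns; exists c; auto).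
    assert (Hbounded : bounded (S m) c).
    { apply (IHd (S m) c); [|exact Hbc].
      apply (leA_trans _ _ _ (edge_le m c Hc)). rewrite Fc. exact Hla. }
    apply bounded_of_children. intros c' Hc' Fc'.
    rewrite (weak_child_unique m c c' Hc Hc'); [exact Hbounded | congruence | exact Nc].
Qed.

Theorem no_strict_edge_on_every_level :
  ~ (forall k, exists i, i < size (S k) /\ strict k i).
Proof.
  intro Hlevels.
  destruct (uniform_bound (strict_below 0) (size 0)) as [N HN].
  { intros c _. apply (bounded_below_acc (lab 0 c) (ltA_wf _)). apply leA_refl. }
  destruct (Hlevels N) as [i [Hi Si]].
  rewrite (plus_n_O N) in Hi, Si.
  apply (HN (anc 0 (S N) i) N); [apply anc_lt; exact Hi | lia |].
  exists i. auto.
Qed.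

End LabelledForest.

Section WqoSets.

Variables (X : Type) (le : X -> X -> Prop).

Lemma le1_refl : quasi_order le -> forall A, le1 le A A.
Proof. intros [Hrefl _] A z Hz. exists z. auto. Qed.

Lemma le1_trans : quasi_order le -> forall A B C, le1 le A B -> le1 le B C -> le1 le A C.
Proof.
  intros [_ Htrans] A B C HAB HBC z Hz.
  destruct (HBC z Hz) as [y [Hy Hyz]]. destruct (HAB y Hy) as [w [Hw Hwy]].
  exists w. eauto.
Qed.

Lemma lt1_le1_trans : quasi_order le -> forall A B C, lt1 le A B -> le1 le B C -> lt1 le A C.
Proof.
  intros Hq A B C [HAB NBA] HBC. split; [exact (le1_trans Hq _ _ _ HAB HBC)|].
  intro HCA. apply NBA. exact (le1_trans Hq _ _ _ HBC HCA).
Qed.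

(* Along a <_1-descending chain g, each g(k+1) has an element x_k above no
   element of g(k), hence above no element of any earlier g(i); the wqo
   property applied to the x_k gives a contradiction. *)
Lemma no_descending_lt1 : wqo le -> forall g : nat -> list X, ~ (forall k, lt1 le (g (S k)) (g k)).
Proof.
  intros [Hq Hgood] g Hdesc.
  assert (Hnew : forall k, exists z, In z (g (S k)) /\ forall y, In y (g k) -> ~ le y z).
  { intro k. destruct (Hdesc k) as [_ Hn]. apply NNPP. intro Hnone. apply Hn.
    intros z Hz. apply NNPP. intro Nz. apply Hnone. exists z. split; [exact Hz|].
    intros y Hy Hyz. apply Nz. eauto. }
  destruct (functional_choice _ Hnew) as [x Hx].
  assert (Hmono : forall i d, le1 le (g (d + i)) (g i)).
  { intros i d. induction d as [|d IHd]; [apply le1_refl; exact Hq|].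
    exact (le1_trans Hq _ _ _ (proj1 (Hdesc (d + i))) IHd). }
  destruct (Hgood x) as [i [j [Hij Hle]]].
  assert (Hji : le1 le (g j) (g (S i))).
  { replace j with ((j - S i) + S i) by lia. apply Hmono. }
  destruct (Hji _ (proj1 (Hx i))) as [y [Hy Hyx]].
  apply (proj2 (Hx j) y Hy). destruct Hq as [_ Htrans]. eauto.
Qed.

Lemma lt1_wf : wqo le -> well_founded (lt1 le).
Proof. intro Hw. apply wf_of_no_descending_chain. apply no_descending_lt1. exact Hw. Qed.

End WqoSets.

(* The witnessing maps of a <_2-descending sequence form a forest as above,
   labelled by the finite sets, with the strict part of <=_1 well-founded. *)
Theorem lemma2 (X : Type) (le : X -> X -> Prop) (Hwqo : wqo le) :
  ~ exists s : nat -> list (list X), forall k, lt2 le (s (S k)) (s k).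
Proof.
  intros [s Hdesc].
  destruct (functional_choice _ Hdesc) as [F HF].
  assert (Hq : quasi_order le) by apply Hwqo.
  apply (no_strict_edge_on_every_level (list X) (le1 le) (lt1 le)
           (le1_refl X le Hq) (le1_trans X le Hq) (lt1_le1_trans X le Hq)
           (lt1_wf X le Hwqo)
           (fun k => length (s k)) (fun k i => nth i (s k) []) F).
  all: intro k; apply (HF k).
Qed.
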